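(* Let $\mathcal G$ be a constructor GRS over a finite signature $\mathcal F$ and let $G\in\mathcal{TG}_{\mathrm{nrm}}(\mathcal F)$. (1) If $(H,l,r)\in\mathcal G$ and $\varphi:H{\restriction}l\to G$ is a homomorphism, then every path in $G$ from $\rho_G$ to $\varphi(l)$ is a safe path. (2) If moreover $\mathcal G$ is precedence terminating with argument separation and $G\to_{\mathcal G}H'$, then $H'\in\mathcal{TG}_{\mathrm{nrm}}(\mathcal F)$.
   Context: Term graphs. $\mathcal F=\mathcal C\cup\mathcal D$ is a finite signature (constructors and defined symbols, disjoint) with arity function $\mathrm{ar}$. A labeled graph consists of a finite acyclic directed graph $(V_G,E_G)$, a partial labeling $\mathrm{lab}_G:V_G\to\mathcal F$ and a successor function $\mathrm{att}_G:V_G\to V_G^*$ such that $\mathrm{att}_G(v)$ has length $\mathrm{ar}(\mathrm{lab}_G(v))$ if $v$ is labeled and is empty otherwise, and the set of entries of $\mathrm{att}_G(v)$ equals $\{u:(v,u)\in E_G\}$; the $j$-th entry is the $j$-th successor of $v$. Unlabeled nodes act as variables. A term graph additionally has a root $\rho_G$ from which every node is reachable; $\mathcal{TG}(\mathcal F)$ is the set of term graphs over $\mathcal F$ and $\mathcal{TG}(\mathcal C)$ those whose labeled nodes all carry constructors. $G{\restriction}v$ is the sub-term graph of nodes reachable from $v$, rooted at $v$; $H\subseteq G$ means $H=G{\restriction}v$ for some $v$. $G$ is closed if every node is labeled; basic if $\mathrm{lab}_G(\rho_G)\in\mathcal D$ and $G{\restriction}v\in\mathcal{TG}(\mathcal C)$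 for every successor $v$ of $\rho_G$. A path $\langle v_1,m_1,\dots,m_{k-1},v_k\rangle$ is a sequence of nodes where $v_{j+1}$ is the $m_j$-th successor of $v_j$. Argument separation. The argument positions of each $f\in\mathcal F$ are split into normal and safe ones, written $f(x_1,\dots,x_k;x_{k+1},\dots,x_{k+l})$; constructors have only safe positions; nodes with the same label have the same separation. For a labeled node $v$, $\mathrm{nrm}(v)$ (resp. $\mathrm{safe}(v)$) is the set of successors at normal (resp. safe) positions. $H\sqsubset_{\mathrm{nrm}}G$ means $H\subseteq G{\restriction}v$ for some $v\in\mathrm{nrm}(\rho_G)$. Rewriting. A homomorphism $\varphi$ from labeled graph $G$ to $H$ is a map $V_G\to V_H$ with $\mathrm{lab}_H(\varphi(v))=\mathrm{lab}_G(v)$ and $\mathrm{att}_H(\varphi(v))=\varphi(v_1),\dots,\varphi(v_k)$ whenever $v$ is labeled with $\mathrm{att}_G(v)=v_1,\dots,v_k$ (nothing is required at unlabeled nodes); it preserves the normal/safe split. A graph rewrite rule $(K,l,r)$ is a labeled graph $K$ with distinct nodes $l,r$ such that every unlabeled node of $K{\restriction}r$ lies in $K{\restriction}l$; it is a constructor rule if $K{\restriction}l$ is basic. A GRS is a (possibly infinite) set of rules; a constructor GRS consists of constructor rules. A redex in $G$ is a pair of a rule $(K,l,r)$ and a homomorphism $\varphi:K{\restriction}l\to G$; the rewrite step $G\to_{\mathcal G}H$ is the standard build/redirection/garbage-collection step: the labeled part of $K{\restriction}r$ not already in $K{\restriction}l$ is copied into $G$ (unlabeled nodes being mapped via $\varphi$),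 all edges into $\varphi(l)$ (and the root, if it is $\varphi(l)$) are redirected to the image of $r$, and nodes unreachable from the root are removed. Thus $H$ arises from $G$ by replacing $G{\restriction}\varphi(l)$ with an instance of $K{\restriction}r$. Precedence termination with argument separation. A precedence $\sqsubset$ is a well-founded strict partial order on $\mathcal F$ in which all constructors are minimal. For term graphs $H,G$ (sub-term graphs of a common graph), $H\sqsubset_{\mathrm{pt}}G$ holds if $\mathrm{lab}_H(v)\sqsubset\mathrm{lab}_G(\rho_G)$ for every labeled node $v$ of $H$ and additionally either (1) $H=G{\restriction}u$ or $H\sqsubset_{\mathrm{pt}}G{\restriction}u$ for some successor $u$ of $\rho_G$; or (2) $\rho_H$ is labeled, $H{\restriction}v\sqsubset_{\mathrm{nrm}}G$ for each $v\in\mathrm{nrm}(\rho_H)$, and $H{\restriction}v\sqsubset_{\mathrm{pt}}G$ for each $v\in\mathrm{safe}(\rho_H)$. A GRS $\mathcal G$ is precedence terminating with argument separation if for some argument separation and some precedence, $K{\restriction}r\sqsubset_{\mathrm{pt}}K{\restriction}l$ for every rule $(K,l,r)\in\mathcal G$. Safe paths and $\mathcal{TG}_{\mathrm{nrm}}$. A path $\langle v_1,m_1,\dots,v_k\rangle$ is safe if $v_{j+1}\in\mathrm{safe}(v_j)$ for all $j<k$ (the trivial path $\langle v\rangle$ is safe). $\mathcal{TG}_{\mathrm{nrm}}(\mathcal F)\subseteq\mathcal{TG}(\mathcal F)$ is defined inductively: $G\in\mathcal{TG}_{\mathrm{nrm}}(\mathcal F)$ if $G\in\mathcal{TG}(\mathcal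 C)$, or if $G{\restriction}v\in\mathcal{TG}(\mathcal C)$ for every $v\in\mathrm{nrm}(\rho_G)$ and $G{\restriction}v\in\mathcal{TG}_{\mathrm{nrm}}(\mathcal F)$ for every $v\in\mathrm{safe}(\rho_G)$. *)

From mathcomp Require Import all_boot.
From Stdlib Require Import ClassicalEpsilon.

Set Implicit Arguments.
Unset Strict Implicit.
Unset Printing Implicit Defensive.

(* A symbol f is a constructor iff [is_con f]; otherwise it is defined  *)
(* (so C and D are disjoint and cover F).  [is_nrm f j] says that the   *)
(* j-th argument position (0-based) of f is normal; otherwise safe.     *)
Record signature := Sig {
  sym : finType;
  ar : sym -> nat;
  is_con : sym -> bool;
  is_nrm : sym -> nat -> bool
}.

Record lgraph (S : signature) := LGraph {
  gV : nat -> Prop;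
  glab : nat -> option (sym S);
  gatt : nat -> seq nat
}.

Definition gedge S (G : lgraph S) (u w : nat) : Prop := gV G u /\ w \in gatt G u.

Inductive greach S (G : lgraph S) : nat -> nat -> Prop :=
| reach_refl v : greach G v v
| reach_step u w v : gedge G u w -> greach G w v -> greach G u v.

Definition wf_lgraph S (G : lgraph S) : Prop :=
  (forall v, gV G v ->
     match glab G v with
     | Some f => size (gatt G v) = ar f
     | None => gatt G v = [::]
     end)
  /\ (forall v w, gV G v -> w \in gatt G v -> gV G w)
  /\ (exists s : seq nat, forall v, gV G v -> v \in s)
  /\ (forall u w, gedge G u w -> ~ greach G w u).

Record tgraph (S : signature) := TGraph { tgr : lgraph S; troot : nat }.

Definition is_tg S (T : tgraph S) : Prop :=
  wf_lgraph (tgr T) /\ gV (tgr T) (troot T)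
  /\ (forall v, gV (tgr T) v -> greach (tgr T) (troot T) v).

Definition grestrict S (G : lgraph S) (v : nat) : tgraph S :=
  TGraph (LGraph (fun x => gV G x /\ greach G v x) (glab G) (gatt G)) v.

Definition subtg S (T : tgraph S) (v : nat) : tgraph S := grestrict (tgr T) v.

Definition inTGC S (T : tgraph S) : Prop :=
  is_tg T /\ (forall v f, gV (tgr T) v -> glab (tgr T) v = Some f -> is_con f).

Definition nrm_succ S (G : lgraph S) (v w : nat) : Prop :=
  exists f j, glab G v = Some f /\ j < size (gatt G v)
              /\ nth 0 (gatt G v) j = w /\ is_nrm f j.

Definition safe_succ S (G : lgraph S) (v w : nat) : Prop :=
  exists f j, glab G v = Some f /\ j < size (gatt G v)
              /\ nth 0 (gatt G v) j = w /\ ~~ is_nrm f j.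

Inductive TGnrm S : tgraph S -> Prop :=
| TGnrm_con T : inTGC T -> TGnrm T
| TGnrm_step T : is_tg T ->
    (forall v, nrm_succ (tgr T) (troot T) v -> inTGC (subtg T v)) ->
    (forall v, safe_succ (tgr T) (troot T) v -> TGnrm (subtg T v)) ->
    TGnrm T.

(* Paths <v1, m1, v2, ..., v_k>: start node v1 and list of (m_j, v_{j+1}); *)
(* positions m_j are 0-based.                                            *)
Fixpoint is_path S (G : lgraph S) (v : nat) (p : seq (nat * nat)) : Prop :=
  match p with
  | [::] => gV G v
  | (m, w) :: p' => gV G v /\ m < size (gatt G v) /\ nth 0 (gatt G v) m = w
                    /\ is_path G w p'
  end.

Definition path_end (v : nat) (p : seq (nat * nat)) : nat := last v (map snd p).

Fixpoint safe_path S (G : lgraph S) (v : nat) (p : seq (nat * nat)) : Prop :=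
  match p with
  | [::] => True
  | (m, w) :: p' => safe_succ G v w /\ safe_path G w p'
  end.

(* Homomorphisms between term graphs (no troot condition). *)
Definition ghom S (H G : tgraph S) (phi : nat -> nat) : Prop :=
  forall v, gV (tgr H) v ->
    gV (tgr G) (phi v) /\
    forall f, glab (tgr H) v = Some f ->
      glab (tgr G) (phi v) = Some f /\ gatt (tgr G) (phi v) = map phi (gatt (tgr H) v).

Record rule (S : signature) := Rule { rK : lgraph S; rl : nat; rr : nat }.

Definition wf_rule S (rho : rule S) : Prop :=
  let K := rK rho in
  wf_lgraph K /\ gV K (rl rho) /\ gV K (rr rho) /\ rl rho <> rr rho /\
  (forall v, greach K (rr rho) v -> glab K v = None -> greach K (rl rho) v).

Definition basic S (T : tgraph S) : Prop :=
  exists f, glab (tgr T) (troot T) = Some f /\ ~~ is_con f /\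
    forall w, w \in gatt (tgr T) (troot T) -> inTGC (subtg T w).

Definition constructor_rule S (rho : rule S) : Prop :=
  wf_rule rho /\ basic (grestrict (rK rho) (rl rho)).

Definition constructor_GRS S (R : rule S -> Prop) : Prop :=
  forall rho, R rho -> constructor_rule rho.

(* Rewrite grs_step.  N is a bound on the nodes of G; the copy of a node v  *)
(* of K|r \ K|l is the fresh node N + v.                                 *)
Definition pdec (P : Prop) : bool :=
  if excluded_middle_informative P then true else false.

Definition rewrite_res S (G : tgraph S) (rho : rule S) (phi : nat -> nat) (N : nat)
  : tgraph S :=
  let K := rK rho in
  let newnode v := pdec (greach K (rr rho) v /\ ~ greach K (rl rho) v) in
  let m v := if newnode v then N + v else phi v in
  let V1 x := if N <= x then newnode (x - N) : Prop else gV (tgr G) x in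
  let lab1 x := if N <= x then (if newnode (x - N) then glab K (x - N) else None)
                else glab (tgr G) x in
  let att1 x := if N <= x then (if newnode (x - N) then map m (gatt K (x - N)) else [::])
                else gatt (tgr G) x in
  let red y := if y == phi (rl rho) then m (rr rho) else y in
  let att2 x := map red (att1 x) in
  grestrict (LGraph V1 lab1 att2) (red (troot G)).

Definition grs_step S (R : rule S -> Prop) (G H : tgraph S) : Prop :=
  exists rho phi N, R rho /\ ghom (grestrict (rK rho) (rl rho)) G phi /\
    (forall x, gV (tgr G) x -> x < N) /\ H = rewrite_res G rho phi N.

Definition is_precedence S (p : rel (sym S)) : Prop :=
  irreflexive p /\ transitive p /\ well_founded (fun a b => p a b) /\
  (forall c f, is_con c -> ~~ p f c).

Definition all_below S (p : rel (sym S)) (K : lgraph S) (a : nat) (f : sym S) : Prop :=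
  forall w g, greach K a w -> gV K w -> glab K w = Some g -> p g f.

Definition nrm_lt S (K : lgraph S) (a b : nat) : Prop :=
  exists w, nrm_succ K b w /\ greach K w a.

(* pt p K a b  :=  (K|a) ⊏_pt (K|b), sub-term graphs of the common graph K *)
Inductive pt S (p : rel (sym S)) (K : lgraph S) : nat -> nat -> Prop :=
| pt_sub a b f u : glab K b = Some f -> all_below p K a f -> u \in gatt K b ->
    (a = u \/ pt p K a u) -> pt p K a b
| pt_arg a b f g : glab K b = Some f -> all_below p K a f -> glab K a = Some g ->
    (forall v, nrm_succ K a v -> nrm_lt K v b) ->
    (forall v, safe_succ K a v -> pt p K v b) -> pt p K a b.

Definition PT_sep S (R : rule S -> Prop) : Prop :=
  exists p : rel (sym S), is_precedence p /\
    forall rho, R rho -> pt p (rK rho) (rr rho) (rl rho).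

From mathcomp Require Import all_boot zify.
From Stdlib Require Import Classical ClassicalEpsilon FunctionalExtensionality PropExtensionality.

(* Membership in TG_nrm amounts to: below every normal argument only
   constructors occur.  (1) The image of [l] carries a defined symbol, so a
   path from the root reaching it never crosses a normal edge.  (2) In the
   reduct, an old node keeps its normal arguments, constructor graphs that
   cannot contain the redex; a freshly built node is [pt]-below [l], so its
   normal arguments lie below normal arguments of [l], images of constructor
   graphs of [G], and its safe arguments are again old nodes or [pt]-below
   [l].  The safe spine from the new root therefore stays among such nodes. *)

Set Implicit Arguments.
Unset Strict Implicit.
Unset Printing Implicit Defensive.

Lemma pdecP (P : Prop) : reflect P (pdec P).
Proof. by rewrite /pdec; case: excluded_middle_informative => H; constructor. Qed.

Lemma pdecT (P : Prop) : P -> pdec P = true.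
Proof. by move/pdecP. Qed.

Lemma pdecF (P : Prop) : ~ P -> pdec P = false.
Proof. by move=> H; apply/negbTE/pdecP. Qed.

Section Reachability.
Variables (S : signature) (L : lgraph S).

Lemma greach_trans a b c : greach L a b -> greach L b c -> greach L a c.
Proof. by elim=> // u w v E _ IH /IH; apply: reach_step. Qed.

Lemma greach_edge a b : gedge L a b -> greach L a b.
Proof. by move=> E; apply: reach_step E (reach_refl _ _). Qed.

Lemma greach_case a b : greach L a b ->
  a = b \/ exists2 w, gedge L a w & greach L w b.
Proof. by case=> [|u w v E H]; [left | right; exists w]. Qed.

Lemma greach_gV a b : wf_lgraph L -> gV L a -> greach L a b -> gV L b.
Proof.
move=> [_ [closed _]] + H; elim: H => // u w v [Hu Hw] _ IH _.
exact/IH/(closed u).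
Qed.

Lemma gedge_nth x j : gV L x -> j < size (gatt L x) -> gedge L x (nth 0 (gatt L x) j).
Proof. by move=> Hx Hj; split=> //; apply: mem_nth. Qed.

Lemma nrm_succ_gedge x w : gV L x -> nrm_succ L x w -> gedge L x w.
Proof. by move=> Hx [f [j [_ [Hj [<- _]]]]]; apply: gedge_nth. Qed.

Lemma safe_succ_gedge x w : gV L x -> safe_succ L x w -> gedge L x w.
Proof. by move=> Hx [f [j [_ [Hj [<- _]]]]]; apply: gedge_nth. Qed.

Lemma nrm_or_safe_succ x w : wf_lgraph L -> gV L x -> w \in gatt L x ->
  nrm_succ L x w \/ safe_succ L x w.
Proof.
move=> [arity _] Hx Hw; have := arity x Hx.
case E: (glab L x) => [f|] Hs; last by rewrite Hs in Hw.
have Hj : index w (gatt L x) < size (gatt L x) by rewrite index_mem.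
have Hn := nth_index 0 Hw.
case N: (is_nrm f (index w (gatt L x))); [left | right];
  by exists f, (index w (gatt L x)); rewrite N.
Qed.

Lemma path_greach v p : is_path L v p ->
  gV L (path_end v p) /\ greach L v (path_end v p).
Proof.
elim: p v => [|[m w] p IH] v /=; first by split=> //; apply: reach_refl.
move=> [Hv [Hm [Hw /IH]]]; rewrite /path_end /= => -[Hend Hreach]; split=> //.
by apply: reach_step Hreach; rewrite -Hw; apply: gedge_nth.
Qed.

Lemma greach_of_grestrict v a b :
  greach (tgr (grestrict L v)) a b -> greach L a b.
Proof. by elim=> [x|u w x [[Hu _] Hw] _ IH]; [apply: reach_refl | apply: reach_step IH]. Qed.

Lemma greach_in_grestrict v a b :
  greach L v a -> greach L a b -> greach (tgr (grestrict L v)) a b.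
Proof.
move=> + H; elim: H => [x|u w x [Hu Hw] _ IH] Hv; first exact: reach_refl.
apply: (@reach_step _ _ u w) => //; apply: IH.
by apply: greach_trans Hv _; apply: greach_edge.
Qed.

Lemma wf_grestrict v : wf_lgraph L -> wf_lgraph (tgr (grestrict L v)).
Proof.
move=> [arity [closed [[s Hs] acyclic]]]; split; [|split; [|split]].
- by move=> x [Hx _]; apply: arity.
- move=> x w [Hx Hvx] Hw /=; split; first exact: closed Hw.
  by apply: greach_trans Hvx _; apply: greach_edge.
- by exists s => x [Hx _]; apply: Hs.
- by move=> u w [[Hu _] Hw] /greach_of_grestrict; apply: acyclic.
Qed.

Lemma is_tg_grestrict v : wf_lgraph L -> gV L v -> is_tg (grestrict L v).
Proof.
move=> W Hv; split; first exact: wf_grestrict.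
split; first by split=> //; apply: reach_refl.
by move=> x [_ H]; apply: greach_in_grestrict (reach_refl _ _) H.
Qed.

Lemma grestrict_grestrict x v : greach L x v ->
  grestrict (tgr (grestrict L x)) v = grestrict L v.
Proof.
move=> Hxv; rewrite /grestrict /=; congr TGraph; congr LGraph; apply: functional_extensionality => y.
apply: propositional_extensionality; split.
- by move=> [[Hy _] /greach_of_grestrict].
- move=> [Hy H]; split; first by split=> //; apply: greach_trans H.
  exact: greach_in_grestrict.
Qed.

End Reachability.

Lemma count_lt (T : eqType) (P Q : pred T) s x :
  subpred P Q -> x \in s -> Q x -> ~~ P x -> count P s < count Q s.
Proof.
move=> PQ; elim: s => // a s IH; rewrite inE /= => /orP [/eqP <-|Hs] Hq Hp.
  by rewrite (negbTE Hp) Hq add0n add1n ltnS; apply: sub_count.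
apply: leq_ltn_trans (leq_add (_ : P a <= Q a) (leqnn _)) _.
  by case: (P a) (PQ a) => // ->.
by rewrite ltn_add2l IH.
Qed.

Section Rank.
Variables (S : signature) (L : lgraph S).

(* The rank of [x] counts the nodes reachable from [x]; acyclicity makes it
   strictly decrease along edges. *)
Lemma lgraph_rank : wf_lgraph L -> exists (rk : nat -> nat) (B : nat),
  (forall x y, gedge L x y -> rk y < rk x) /\ (forall x, rk x < B).
Proof.
move=> [_ [_ [[s Hs] acyclic]]].
exists (fun x => count (fun y => pdec (greach L x y)) s), (size s).+1.
split=> [x y E|x]; last by rewrite ltnS count_size.
apply: (@count_lt _ _ _ _ x).
- by move=> z /pdecP H; apply/pdecP; apply: greach_trans H; apply: greach_edge.
- by apply: Hs; case: E.
- by apply/pdecP; apply: reach_refl.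
- by apply/pdecP; apply: acyclic.
Qed.

Lemma acyclic_of_rank (rk : nat -> nat) :
  (forall x y, gedge L x y -> rk y < rk x) -> forall u w, gedge L u w -> ~ greach L w u.
Proof.
move=> rk_edge u w E H.
have rk_reach : forall a b, greach L a b -> rk b <= rk a.
  by move=> a b; elim=> // x y z /rk_edge; lia.
by have := rk_edge _ _ E; have := rk_reach _ _ H; lia.
Qed.

Lemma lgraph_ind (P : nat -> Prop) : wf_lgraph L ->
  (forall x, (forall y, gedge L x y -> P y) -> P x) -> forall x, P x.
Proof.
move=> /lgraph_rank [rk [_ [rk_edge _]]] IH x.
suff: forall n x, rk x < n -> P x by apply; apply: ltnSn.
elim=> // n IHn {}x Hx; apply: IH => y /rk_edge Hy.
by apply: IHn; apply: leq_trans Hy _.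
Qed.

End Rank.

Definition con_closed S (L : lgraph S) (v : nat) : Prop :=
  forall y f, gV L y -> greach L v y -> glab L y = Some f -> is_con f.

Section ConClosed.
Variables (S : signature) (L : lgraph S).

Lemma con_closed_greach a b : greach L a b -> con_closed L a -> con_closed L b.
Proof. by move=> Hab H y f Hy Hby; apply: H Hy _; apply: greach_trans Hby. Qed.

Lemma con_closed_not_greach z y f : con_closed L z ->
  gV L y -> glab L y = Some f -> ~~ is_con f -> ~ greach L z y.
Proof. by move=> Hz Hy Hl Hf /(Hz y f Hy)/(_ Hl); rewrite (negbTE Hf). Qed.

Lemma TGnrm_grestrict (P : nat -> Prop) : wf_lgraph L ->
  (forall x, P x -> gV L x) ->
  (forall x v, P x -> nrm_succ L x v -> con_closed L v) ->
  (forall x v, P x -> safe_succ L x v -> P v) ->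
  forall x, P x -> TGnrm (grestrict L x).
Proof.
move=> W PV Pnrm Psafe; apply: (lgraph_ind (P := fun x => P x -> _) W) => x IH Px.
have Hx := PV x Px.
have [_ [closed _]] := W.
apply: TGnrm_step; first exact: is_tg_grestrict.
- move=> v Hv; have E := nrm_succ_gedge Hx Hv.
  rewrite /subtg grestrict_grestrict /=; last exact: greach_edge.
  split; first by apply: is_tg_grestrict => //; apply: closed E.2.
  by move=> y f [Hy Hvy]; apply: Pnrm Hv y f Hy Hvy.
- move=> v Hv; have E := safe_succ_gedge Hx Hv.
  rewrite /subtg grestrict_grestrict /=; last exact: greach_edge.
  exact/IH/(Psafe x).
Qed.

End ConClosed.

Lemma TGnrm_is_tg S (T : tgraph S) : TGnrm T -> is_tg T.
Proof. by case=> // T' []. Qed.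

Lemma TGnrm_nrm_succ_root S (T : tgraph S) : TGnrm T -> forall y z,
  greach (tgr T) (troot T) y -> nrm_succ (tgr T) y z -> con_closed (tgr T) z.
Proof.
elim=> {T} [T [_ Hcon] y z _ _ y' f Hy' _|T Htg Hnrm _ IH y z Hy Hz]; first exact: Hcon.
have [W [Hroot _]] := Htg.
have Hyz := nrm_succ_gedge (greach_gV W Hroot Hy) Hz.
move=> a g Ha Hra; case: (greach_case Hy) => [Ey|[w Ew Hwy]].
  by subst y; apply: (Hnrm z Hz).2 a g (conj Ha Hra).
have Hwz := greach_trans Hwy (greach_edge Hyz).
have Hwa := greach_trans Hwz Hra.
case: (nrm_or_safe_succ W Hroot Ew.2) => Hw; first exact: (Hnrm w Hw).2 a g (conj Ha Hwa).
exact: (IH w Hw y z (greach_in_grestrict (reach_refl _ _) Hwy) Hz a g (conj Ha Hwa)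
  (greach_in_grestrict Hwz Hra)).
Qed.

Lemma TGnrm_nrm_succ S (T : tgraph S) : TGnrm T -> forall y z,
  gV (tgr T) y -> nrm_succ (tgr T) y z -> con_closed (tgr T) z.
Proof.
by move=> H y z Hy; apply: (TGnrm_nrm_succ_root H); apply: (TGnrm_is_tg H).2.2.
Qed.

Lemma safe_path_to_defined S (L : lgraph S) : wf_lgraph L ->
  (forall y z, gV L y -> nrm_succ L y z -> con_closed L z) ->
  forall p y f, is_path L y p -> glab L (path_end y p) = Some f -> ~~ is_con f ->
  safe_path L y p.
Proof.
move=> [arity _] Hnrm; elim=> [//|[m w] p IH] y f /= [Hy [Hm [Hw Hp]]] Hl Hf.
rewrite /path_end /= in Hl; split; last exact: IH Hp Hl Hf.
have := arity y Hy; case E: (glab L y) => [g|] Hs; last by rewrite Hs in Hm.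
case N: (is_nrm g m); last by exists g, m; rewrite N.
have [Hend Hreach] := path_greach Hp.
have Hn : nrm_succ L y w by exists g, m; rewrite N.
by case: (con_closed_not_greach (Hnrm y w Hy Hn) Hend Hl Hf).
Qed.

Section Homomorphism.
Variables (S : signature) (K : lgraph S) (l : nat) (G : tgraph S) (phi : nat -> nat).
Hypotheses (WK : wf_lgraph K) (HlV : gV K l) (Hh : ghom (grestrict K l) G phi).

Lemma hom_gV k : greach K l k -> gV (tgr G) (phi k).
Proof. by move=> Hk; apply: (Hh (conj (greach_gV WK HlV Hk) Hk)).1. Qed.

Lemma hom_gedge a w : gedge K a w -> greach K l a -> gedge (tgr G) (phi a) (phi w).
Proof.
move=> [Ha Hw] Hla; have [HG Hf] := Hh (conj Ha Hla).
have := WK.1 a Ha; case E: (glab K a) => [f|] Hs; last by rewrite Hs in Hw.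
by rewrite /gedge (Hf f E).2; split=> //; apply: map_f.
Qed.

Lemma hom_greach a b : greach K a b -> greach K l a -> greach (tgr G) (phi a) (phi b).
Proof.
elim=> [x|u w x E _ IH] Hl; first exact: reach_refl.
apply: reach_step (hom_gedge E Hl) (IH _).
exact: greach_trans Hl (greach_edge E).
Qed.

Lemma hom_not_greach_root k : is_tg G -> greach K l k -> k <> l ->
  ~ greach (tgr G) (phi k) (phi l).
Proof.
move=> Htg Hk Hne; case: (greach_case Hk) => [E|[c Ec Hck]]; first by rewrite E in Hne.
move=> Hback; apply: (Htg.1.2.2.2 _ _ (hom_gedge Ec (reach_refl _ _))).
exact: greach_trans (hom_greach Hck (greach_edge Ec)) Hback.
Qed.

End Homomorphism.

Lemma pt_all_below S p (K : lgraph S) a b : pt p K a b ->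
  exists2 f, glab K b = Some f & all_below p K a f.
Proof. by case=> a' b' f *; exists f. Qed.

Lemma pt_inv S p (K : lgraph S) a b : pt p K a b ->
  (exists2 u, u \in gatt K b & a = u \/ pt p K a u) \/
  (forall v, nrm_succ K a v -> nrm_lt K v b) /\ (forall v, safe_succ K a v -> pt p K v b).
Proof. by case=> [a' b' f u _ _ Hu H|*]; [left; exists u | right]. Qed.

Lemma pt_not_greach S p (K : lgraph S) a b : irreflexive p -> gV K b -> pt p K a b ->
  ~ greach K a b.
Proof.
move=> irr Hb /pt_all_below [f Hf below] Hab.
by have := below b f Hab Hb Hf; rewrite irr.
Qed.

Section SuccessorTransfer.
Variables (S : signature) (L1 L2 : lgraph S) (x1 x2 : nat) (h : nat -> nat).
Hypotheses (lab_eq : glab L2 x2 = glab L1 x1) (att_eq : gatt L2 x2 = map h (gatt L1 x1)).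

Lemma nrm_succ_map w : nrm_succ L1 x1 w -> nrm_succ L2 x2 (h w).
Proof.
move=> [f [j [Hf [Hj [<- Hn]]]]]; exists f, j.
by rewrite lab_eq att_eq size_map (nth_map 0).
Qed.

Lemma nrm_succ_map_inv v : nrm_succ L2 x2 v -> exists2 w, nrm_succ L1 x1 w & v = h w.
Proof.
move=> [f [j [Hf [Hj [<- Hn]]]]]; rewrite att_eq size_map in Hj.
by exists (nth 0 (gatt L1 x1) j); [exists f, j; rewrite -lab_eq | rewrite att_eq (nth_map 0)].
Qed.

Lemma safe_succ_map_inv v : safe_succ L2 x2 v -> exists2 w, safe_succ L1 x1 w & v = h w.
Proof.
move=> [f [j [Hf [Hj [<- Hn]]]]]; rewrite att_eq size_map in Hj.
by exists (nth 0 (gatt L1 x1) j); [exists f, j; rewrite -lab_eq | rewrite att_eq (nth_map 0)].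
Qed.

End SuccessorTransfer.

Section RewriteStep.
Variables (S : signature) (G : tgraph S) (rho : rule S) (phi : nat -> nat) (N : nat).
Local Notation K := (rK rho).
Local Notation l := (rl rho).
Local Notation r := (rr rho).
Local Notation LG := (tgr G).

Definition new_node (u : nat) : bool := pdec (greach K r u /\ ~ greach K l u).
Definition copy_node (u : nat) : nat := if new_node u then N + u else phi u.
Definition redirect (y : nat) : nat := if y == phi l then copy_node r else y.

Definition step_graph : lgraph S := LGraph
  (fun x => if N <= x then new_node (x - N) : Prop else gV LG x)
  (fun x => if N <= x then (if new_node (x - N) then glab K (x - N) else None)
            else glab LG x)
  (fun x => map redirect (if N <= x then
              (if new_node (x - N) then map copy_node (gatt K (x - N)) else [::])
            else gatt LG x)).

Lemma rewrite_resE : rewrite_res G rho phi N = grestrict step_graph (redirect (troot G)).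
Proof. by []. Qed.

Lemma step_old x : x < N -> [/\ gV step_graph x = gV LG x,
  glab step_graph x = glab LG x & gatt step_graph x = map redirect (gatt LG x)].
Proof. by move=> Hx; rewrite /= leqNgt Hx. Qed.

Lemma step_new u : new_node u -> [/\ gV step_graph (N + u),
  glab step_graph (N + u) = glab K u &
  gatt step_graph (N + u) = map redirect (map copy_node (gatt K u))].
Proof. by move=> Hu; rewrite /= leq_addr addKn Hu. Qed.

Lemma step_gV_cases x : gV step_graph x ->
  (x < N /\ gV LG x) \/ exists2 u, x = N + u & new_node u.
Proof.
rewrite /=; case: (leqP N x) => Hx H; last by left.
by right; exists (x - N); first lia.
Qed.

Lemma new_nodeP u : new_node u -> greach K r u /\ ~ greach K l u.
Proof. by move/pdecP. Qed.

Lemma old_node_greach u : ~~ new_node u -> greach K r u -> greach K l u.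
Proof. by move=> /pdecP Hu Hr; apply: NNPP => Hl; apply: Hu. Qed.

Lemma copy_node_shared k : greach K l k -> copy_node k = phi k.
Proof. by move=> Hk; rewrite /copy_node /new_node pdecF // => -[]. Qed.

Lemma redirect_id y : y <> phi l -> redirect y = y.
Proof. by move=> H; rewrite /redirect; case: eqP. Qed.

Lemma redirect_root : redirect (phi l) = copy_node r.
Proof. by rewrite /redirect eqxx. Qed.

Hypotheses (WK : wf_lgraph K) (HlV : gV K l) (HrV : gV K r) (Hrl : ~ greach K r l).
Hypotheses (Htg : is_tg G) (Hh : ghom (grestrict K l) G phi).
Hypothesis HN : forall x, gV LG x -> x < N.

Lemma phi_root_lt : phi l < N.
Proof. exact/HN/(hom_gV WK HlV Hh)/reach_refl. Qed.

Lemma redirect_new u : redirect (N + u) = N + u.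
Proof. by apply: redirect_id => E; have := phi_root_lt; rewrite -E; lia. Qed.

(* A node shared by [K|l] and [K|r] differs from [l] since [r] does not reach
   [l]; so by acyclicity of [G] its image cannot reach the redex. *)
Lemma copy_node_cases k : greach K r k ->
  (new_node k /\ copy_node k = N + k) \/
  [/\ greach K l k, copy_node k = phi k & ~ greach LG (phi k) (phi l)].
Proof.
rewrite /copy_node => Hk; case: ifP => Hnew; first by left.
right; have Hlk := old_node_greach (negbT Hnew) Hk; split=> //.
by apply: (hom_not_greach_root WK Hh Htg Hlk) => E; apply: Hrl; rewrite -E.
Qed.

Lemma redirect_copy k : greach K r k -> redirect (copy_node k) = copy_node k.
Proof.
case/copy_node_cases=> [[_ ->]|[_ -> Hk]]; first exact: redirect_new.
by apply: redirect_id => E; apply: Hk; rewrite E; apply: reach_refl.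
Qed.

Lemma step_gV_copy k : greach K r k -> gV step_graph (copy_node k).
Proof.
case/copy_node_cases=> [[Hk ->]|[Hlk -> _]]; first by case: (step_new Hk).
have Hk := hom_gV WK HlV Hh Hlk.
by case: (step_old (HN Hk)) => ->.
Qed.

Lemma new_node_gV u : new_node u -> gV K u.
Proof. by move/new_nodeP=> [Hu _]; apply: greach_gV WK HrV Hu. Qed.

Lemma step_new_att u : new_node u -> gatt step_graph (N + u) = map copy_node (gatt K u).
Proof.
move=> Hu; case: (step_new Hu) => _ _ ->; rewrite -map_comp; apply/eq_in_map => k Hk /=.
apply: redirect_copy; apply: greach_trans (new_nodeP Hu).1 (greach_edge _).
by split=> //; apply: new_node_gV.
Qed.

Lemma step_gV_redirect z : gV LG z -> gV step_graph (redirect z).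
Proof.
move=> Hz; case: (eqVneq z (phi l)) => [->|Hne].
  by rewrite redirect_root; apply/step_gV_copy/reach_refl.
by rewrite redirect_id; [case: (step_old (HN Hz)) => -> | apply/eqP].
Qed.

Lemma step_acyclic u w : gedge step_graph u w -> ~ greach step_graph w u.
Proof.
have [rkG [BG [rkG_edge rkG_lt]]] := lgraph_rank Htg.1.
have [rkK [BK [rkK_edge rkK_lt]]] := lgraph_rank WK.
(* Three layers: old nodes reaching the redex, then copies, then the rest of [G]. *)
pose rk x := if N <= x then BG + rkK (x - N)
  else if pdec (greach LG x (phi l)) then BG + BK + rkG x else rkG x.
have rk_new k : rk (N + k) = BG + rkK k by rewrite /rk leq_addr addKn.
have rk_old x : gV LG x -> rk x = if pdec (greach LG x (phi l)) then BG + BK + rkG x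
    else rkG x by move=> Hx; rewrite /rk leqNgt HN.
have rk_copy k : greach K r k -> rk (copy_node k) < BG + BK.
  case/copy_node_cases=> [[_ ->]|[Hlk -> Hk]]; first by rewrite rk_new; have := rkK_lt k; lia.
  by rewrite rk_old ?pdecF //; [have := rkG_lt (phi k); lia | apply: hom_gV Hlk].
apply: (@acyclic_of_rank _ _ rk) => {u w} x y [Hx Hy].
case: (step_gV_cases Hx) Hy => [[HxN HxG]|[u -> Hu]].
- case: (step_old HxN) => _ _ -> /mapP [z Hz ->].
  have Ez : gedge LG x z by [].
  have Hzlt := rkG_edge _ _ Ez.
  have HzG : gV LG z by apply: Htg.1.2.1 Hz.
  rewrite (rk_old x HxG); case: (eqVneq z (phi l)) => [Ezl|Hne].
    rewrite Ezl redirect_root pdecT; last by rewrite -Ezl; apply: greach_edge.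
    by have := rk_copy r (reach_refl _ _); lia.
  rewrite redirect_id; last exact/eqP.
  rewrite (rk_old z HzG); case: (pdecP (greach LG z (phi l))) => Hzl; last by case: pdec; lia.
  by rewrite pdecT; [lia | apply: greach_trans (greach_edge Ez) Hzl].
- rewrite step_new_att // rk_new => /mapP [k Hk ->].
  have Ek : gedge K u k by split=> //; apply: new_node_gV.
  have Hrk := greach_trans (new_nodeP Hu).1 (greach_edge Ek).
  case: (copy_node_cases Hrk) => [[_ ->]|[Hlk -> Hnot]].
    by rewrite rk_new; have := rkK_edge _ _ Ek; lia.
  by rewrite rk_old ?pdecF //; [have := rkG_lt (phi k); lia | apply: hom_gV Hlk].
Qed.

Lemma wf_step_graph : wf_lgraph step_graph.
Proof.
have [arityG [closedG _]] := Htg.1.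
have [arityK [_ [[sK HsK] _]]] := WK.
split; [|split; [|split]].
- move=> v /step_gV_cases [[Hv HvG]|[u -> Hu]].
    case: (step_old Hv) => _ -> ->; have := arityG v HvG.
    by case: glab => [f|] H; rewrite ?size_map // H.
  rewrite step_new_att //; case: (step_new Hu) => _ -> _; have := arityK u (new_node_gV Hu).
  by case: glab => [f|] H; rewrite ?size_map // H.
- move=> v w /step_gV_cases [[Hv HvG]|[u -> Hu]].
    case: (step_old Hv) => _ _ -> /mapP [z Hz ->].
    exact/step_gV_redirect/(closedG v).
  rewrite step_new_att // => /mapP [k Hk ->]; apply: step_gV_copy.
  apply: greach_trans (new_nodeP Hu).1 (greach_edge _).
  by split=> //; apply: new_node_gV.
- exists (iota 0 N ++ map (addn N) sK) => v /step_gV_cases [[Hv _]|[u -> Hu]].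
    by rewrite mem_cat mem_iota Hv.
  by rewrite mem_cat map_f ?orbT //; apply/HsK/new_node_gV.
- exact: step_acyclic.
Qed.

Variable p : rel (sym S).
Hypotheses (Hprec : is_precedence p) (Hpt : pt p K r l).
Hypothesis Hbasic : basic (grestrict K l).
Hypothesis HG_nrm : forall y z, gV LG y -> nrm_succ LG y z -> con_closed LG z.

Lemma con_closed_not_greach_root z : con_closed LG z -> ~ greach LG z (phi l).
Proof.
have [f [Hf [Hfc _]]] := Hbasic.
have [HlG Hlab] := Hh (conj HlV (reach_refl _ _)).
by move=> Hz; apply: con_closed_not_greach Hz HlG (Hlab f Hf).1 Hfc.
Qed.

Lemma con_closed_step z : gV LG z -> con_closed LG z -> con_closed step_graph z.
Proof.
move=> HzG Hz.
have stay_old a y : greach step_graph a y -> gV LG a -> greach LG z a ->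
    gV LG y /\ greach LG z y.
  elim=> [x|u w {}y [_ Hw] _ IH] HuG Hzu; first by split.
  move: Hw; case: (step_old (HN HuG)) => _ _ -> /mapP [c Hc Ew]; subst w.
  have Hzc : greach LG z c by apply: greach_trans Hzu (greach_edge (conj HuG Hc)).
  rewrite redirect_id in IH => [|Ec]; last by apply: (con_closed_not_greach_root Hz); rewrite -Ec.
  by apply: IH => //; apply: Htg.1.2.1 Hc.
move=> y f Hy Hzy; have [yG zy] := stay_old z y Hzy HzG (reach_refl _ _).
by case: (step_old (HN yG)) => _ -> _; apply: Hz.
Qed.

(* A copied node cannot stem from the first clause of [pt]: it would lie below
   a successor of [l], whose labels are constructors and hence minimal. *)
Lemma pt_new_node u f : new_node u -> pt p K u l -> glab K u = Some f ->
  (forall v, nrm_succ K u v -> nrm_lt K v l) /\ (forall v, safe_succ K u v -> pt p K v l).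
Proof.
move=> Hu /pt_inv [[w Hw [Ew|Hptw]]|//] Hf.
  by case: (new_nodeP Hu).2; rewrite Ew; apply/greach_edge.
have [f' Hf' below] := pt_all_below Hptw.
have [g [_ [_ Hsucc]]] := Hbasic.
have [_ Hw_con] := Hsucc w Hw.
have Hcon : is_con f'.
  apply: (Hw_con w f') Hf'; split; last exact: reach_refl.
  by split; [apply: WK.2.1 HlV Hw | apply/greach_edge].
by have := Hprec.2.2.2 f' f Hcon; rewrite (below u f (reach_refl _ _) (new_node_gV Hu) Hf).
Qed.

Definition step_inv (x : nat) : Prop :=
  (x < N /\ gV LG x /\ x <> phi l) \/ exists2 u, x = N + u & new_node u /\ pt p K u l.

Lemma step_inv_copy k : greach K r k -> pt p K k l -> step_inv (copy_node k).
Proof.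
move=> Hrk Hptk; case: (copy_node_cases Hrk) => [[Hk ->]|[Hlk -> Hnot]].
  by right; exists k.
have HkG := hom_gV WK HlV Hh Hlk.
left; split; first exact: HN.
by split=> // E; apply: Hnot; rewrite E; apply: reach_refl.
Qed.

Lemma step_inv_redirect z : gV LG z -> step_inv (redirect z).
Proof.
move=> Hz; case: (eqVneq z (phi l)) => [->|Hne].
  by rewrite redirect_root; apply: step_inv_copy (reach_refl _ _) Hpt.
by rewrite redirect_id; [left; split; [apply: HN | split=> //; apply/eqP] | apply/eqP].
Qed.

Lemma step_inv_gV x : step_inv x -> gV step_graph x.
Proof.
case=> [[Hx [HxG _]]|[u -> [Hu _]]]; last by case: (step_new Hu).
by case: (step_old Hx) => ->.
Qed.

Lemma step_inv_nrm x v : step_inv x -> nrm_succ step_graph x v -> con_closed step_graph v.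
Proof.
case=> [[Hx [HxG _]]|[u -> [Hu Hptu]]].
  case: (step_old Hx) => _ Hlab Hatt /(nrm_succ_map_inv Hlab Hatt) [w Hw ->].
  have Hw_con := HG_nrm HxG Hw.
  have HwG : gV LG w by apply: Htg.1.2.1 HxG (nrm_succ_gedge HxG Hw).2.
  rewrite redirect_id; first exact: con_closed_step.
  by move=> E; apply: (con_closed_not_greach_root Hw_con); rewrite E; apply: reach_refl.
case: (step_new Hu) => _ Hlab _.
move=> /(nrm_succ_map_inv Hlab (step_new_att Hu)) [k Hk ->].
have [f [j [Hf _]]] := Hk.
have [w [Hlw Hwk]] := (pt_new_node Hu Hptu Hf).1 k Hk.
have Hlk := greach_trans (greach_edge (nrm_succ_gedge HlV Hlw)) Hwk.
have [_ Hl_hom] := Hh (conj HlV (reach_refl _ _)).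
have [fl [_ [Hfl _]]] := Hlw.
have [Hlab_l Hatt_l] := Hl_hom fl Hfl; rewrite -Hfl in Hlab_l.
have Hphiw := nrm_succ_map Hlab_l Hatt_l Hlw.
have HlG := hom_gV WK HlV Hh (reach_refl _ _).
have Hk_con := con_closed_greach (hom_greach WK Hh Hwk (greach_edge (nrm_succ_gedge HlV Hlw)))
  (HG_nrm HlG Hphiw).
rewrite copy_node_shared //; apply: (con_closed_step _ Hk_con).
exact: (hom_gV WK HlV Hh Hlk).
Qed.

Lemma step_inv_safe x v : step_inv x -> safe_succ step_graph x v -> step_inv v.
Proof.
case=> [[Hx [HxG _]]|[u -> [Hu Hptu]]].
  case: (step_old Hx) => _ Hlab Hatt /(safe_succ_map_inv Hlab Hatt) [w Hw ->].
  by apply: step_inv_redirect; apply: Htg.1.2.1 HxG (safe_succ_gedge HxG Hw).2.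
case: (step_new Hu) => _ Hlab _.
move=> /(safe_succ_map_inv Hlab (step_new_att Hu)) [k Hk ->].
have [f [j [Hf _]]] := Hk.
apply: step_inv_copy; last exact: (pt_new_node Hu Hptu Hf).2.
exact: greach_trans (new_nodeP Hu).1 (greach_edge (safe_succ_gedge (new_node_gV Hu) Hk)).
Qed.

Lemma TGnrm_step_graph : TGnrm (rewrite_res G rho phi N).
Proof.
rewrite rewrite_resE; apply: (TGnrm_grestrict wf_step_graph step_inv_gV) => //.
- exact: step_inv_nrm.
- exact: step_inv_safe.
- exact/step_inv_redirect/Htg.2.1.
Qed.

End RewriteStep.

Lemma safe_path_to_redex S (G : tgraph S) (rho : rule S) phi :
  constructor_rule rho -> TGnrm G -> ghom (grestrict (rK rho) (rl rho)) G phi ->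
  forall p, is_path (tgr G) (troot G) p -> path_end (troot G) p = phi (rl rho) ->
  safe_path (tgr G) (troot G) p.
Proof.
move=> [[_ [HlV _]] [f [Hf [Hfc _]]]] HG Hh p Hp Hend.
have [_ Hl_hom] := Hh (rl rho) (conj HlV (reach_refl _ _)).
apply: (safe_path_to_defined (TGnrm_is_tg HG).1 (TGnrm_nrm_succ HG)) Hp _ Hfc.
by rewrite Hend; apply: (Hl_hom f Hf).1.
Qed.

Lemma TGnrm_rewrite_res S (G : tgraph S) (rho : rule S) phi N p :
  constructor_rule rho -> is_precedence p -> pt p (rK rho) (rr rho) (rl rho) ->
  TGnrm G -> ghom (grestrict (rK rho) (rl rho)) G phi ->
  (forall x, gV (tgr G) x -> x < N) -> TGnrm (rewrite_res G rho phi N).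
Proof.
move=> [[WK [HlV [HrV _]]] Hbasic] Hprec Hpt HG Hh HN.
have Hrl := pt_not_greach Hprec.1 HlV Hpt.
exact: (TGnrm_step_graph WK HlV HrV Hrl (TGnrm_is_tg HG) Hh HN Hprec Hpt Hbasic
  (TGnrm_nrm_succ HG)).
Qed.

Theorem mainTheorem2 (S : signature)
  (sep_con : forall f j, is_con f -> j < ar f -> ~~ @is_nrm S f j)
  (R : rule S -> Prop) (HR : constructor_GRS R)
  (G : tgraph S) (HG : TGnrm G) :
  (forall rho phi, R rho -> ghom (grestrict (rK rho) (rl rho)) G phi ->
     forall p, is_path (tgr G) (troot G) p ->
       path_end (troot G) p = phi (rl rho) ->
       safe_path (tgr G) (troot G) p)
  /\
  (PT_sep R -> forall H', grs_step R G H' -> TGnrm H').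
Proof.
split=> [rho phi Hr Hh|[p [Hprec Hpts]] H' [rho [phi [N [Hr [Hh [HN ->]]]]]]].
  exact: safe_path_to_redex (HR rho Hr) HG Hh.
exact: TGnrm_rewrite_res (HR rho Hr) Hprec (Hpts rho Hr) HG Hh HN.
Qed.
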